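(* Let $\alpha,\beta,\gamma\in\Bbbk^n$ and $\mathcal H=\mathcal H(\alpha,\beta,\gamma)$. A $\Bbbk$-basis of $\mathcal H$ is given by the (images of the) paths \[(u_iu_{i+1}\cdots u_{i+k-1})\,(d_{i+k-1}u_{i+k-1})^j\,(d_{i+k-1}d_{i+k-2}\cdots d_{i+k-\ell}),\qquad i\in Q_0,\ j,k,\ell\ge 0,\] where the block of $u$'s is empty if $k=0$, the block of $d$'s is empty if $\ell=0$, and for $j=k=\ell=0$ the path is the trivial path $e_i$ (indices mod $n$; in particular $k,\ell$ may exceed $n$, so arrows repeat).
   Context: $\Bbbk$ is an algebraically closed field of characteristic zero. Fix $n\ge1$; indices are taken modulo $n$ and $Q_0=\{0,\dots,n-1\}$. Let $Q$ be the quiver with vertex set $Q_0$ and arrows $u_i:i\to i+1$ and $d_i:i+1\to i$ for each $i\in Q_0$ (for $n=1$ these are two loops). Paths are written left to right: in a path $a_1a_2\cdots a_m$ the target of $a_j$ is the source of $a_{j+1}$; multiplication in the path algebra $\Bbbk Q$ is concatenation (zero if the paths do not compose), and $e_i$ is the trivial path at $i$, so $e_iu_i=u_i=u_ie_{i+1}$ and $e_{i+1}d_i=d_i=d_ie_i$. For $\alpha,\beta,\gamma\in\Bbbk^n$ the quiver down-up algebra $\mathcal H(\alpha,\beta,\gamma)$ is $\Bbbk Q$ modulo the relations $d_{i-1}u_{i-1}u_i=\alpha_iu_id_iu_i+\beta_iu_iu_{i+1}d_{i+1}+\gamma_iu_i$ and $d_id_{i-1}u_{i-1}=\alpha_id_iu_id_i+\beta_iu_{i+1}d_{i+1}d_i+\gamma_id_i$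 for all $i\in Q_0$. *)

From HB Require Import structures.
From mathcomp Require Import all_boot all_order all_algebra.
Set Implicit Arguments. Unset Strict Implicit. Unset Printing Implicit Defensive.
Import Order.TTheory GRing.Theory Num.Theory.

(* Quiver Q with vertices 0..n-1 (represented as nats < n, indices mod n).
   An arrow is a pair (b, i) with i < n: (true, i) = u_i : i -> i+1,
   (false, i) = d_i : i+1 -> i. *)
Definition arrow := (bool * nat)%type.

Definition asrc (n : nat) (a : arrow) : nat :=
  if a.1 then a.2 else (a.2 + 1) %% n.
Definition atgt (n : nat) (a : arrow) : nat :=
  if a.1 then (a.2 + 1) %% n else a.2.

(* A path: start vertex together with the list of arrows, read left to right
   (target of each arrow = source of the next). *)
Definition qpath := (nat * seq arrow)%type.

Fixpoint chain (n : nat) (v : nat) (s : seq arrow) : bool :=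
  match s with
  | [::] => true
  | a :: s' => (a.2 < n) && (asrc n a == v) && chain n (atgt n a) s'
  end.

Definition valid_path (n : nat) (p : qpath) : bool := (p.1 < n) && chain n p.1 p.2.

Definition ptgt (n : nat) (p : qpath) : nat := last p.1 (map (atgt n) p.2).

(* concatenation of paths (None = zero when they do not compose) *)
Definition pmul (n : nat) (p q : qpath) : option qpath :=
  if ptgt n p == q.1 then Some (p.1, p.2 ++ q.2) else None.

(* elements of the path algebra k Q, given as finite formal linear combinations *)
Definition lc (F : Type) := seq (F * qpath).

Definition coef (F : nzRingType) (f : lc F) (w : qpath) : F :=
  (\sum_(x <- f | x.2 == w) x.1)%R.

Definition sandwich (F : nzRingType) (n : nat) (p : qpath) (r : lc F) (q : qpath)
  : lc F :=
  pmap (fun x : F * qpath =>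
          match pmul n p x.2 with
          | Some pw => match pmul n pw q with
                       | Some pwq => Some (x.1, pwq)
                       | None => None end
          | None => None end) r.

Definition vprev (n i : nat) : nat := (i + n - 1) %% n.
Definition vnext (n i : nat) : nat := (i + 1) %% n.

(* The defining relations at vertex i (i < n):
   rel1: d_{i-1}u_{i-1}u_i - a_i u_i d_i u_i - b_i u_i u_{i+1} d_{i+1} - c_i u_i
   rel2: d_i d_{i-1} u_{i-1} - a_i d_i u_i d_i - b_i u_{i+1} d_{i+1} d_i - c_i d_i *)
Definition relation (F : nzRingType) (n : nat) (al be ga : n.-tuple F)
  (r : bool * nat) : lc F :=
  let i := r.2 in
  let a := nth 0%R al i in let b := nth 0%R be i in let c := nth 0%R ga i in
  if r.1 then
    [:: (1%R, (i, [:: (false, vprev n i); (true, vprev n i); (true, i)]));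
        ((- a)%R, (i, [:: (true, i); (false, i); (true, i)]));
        ((- b)%R, (i, [:: (true, i); (true, vnext n i); (false, vnext n i)]));
        ((- c)%R, (i, [:: (true, i)]))]
  else
    [:: (1%R, (vnext n i, [:: (false, i); (false, vprev n i); (true, vprev n i)]));
        ((- a)%R, (vnext n i, [:: (false, i); (true, i); (false, i)]));
        ((- b)%R, (vnext n i, [:: (true, vnext n i); (false, vnext n i); (false, i)]));
        ((- c)%R, (vnext n i, [:: (false, i)]))].

(* f : paths -> F (coefficient function of an element of kQ) lies in the
   two-sided ideal generated by the relations: it is a finite sum
   sum c * p * rel * q with p, q paths of Q. *)
Definition in_ideal (F : nzRingType) (n : nat) (al be ga : n.-tuple F)
  (f : qpath -> F) : Prop :=
  exists L : seq (F * qpath * (bool * nat) * qpath),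
    (forall x, x \in L ->
       [/\ valid_path n x.1.1.2, valid_path n x.2 & x.1.2.2 < n]) /\
    forall w, f w =
      coef (flatten [seq [seq ((x.1.1.1 * y.1)%R, y.2) | y <- sandwich n x.1.1.2
                             (relation al be ga x.1.2) x.2] | x <- L]) w.

(* the path (u_i ... u_{i+k-1}) (d_{i+k-1} u_{i+k-1})^j (d_{i+k-1} ... d_{i+k-l}) *)
Definition bpath (n i j k l : nat) : qpath :=
  (i, [seq (true, (i + m) %% n) | m <- iota 0 k]
      ++ flatten (nseq j [:: (false, (i + k + n - 1) %% n); (true, (i + k + n - 1) %% n)])
      ++ [seq (false, (i + k + n * m.+1 - m.+1) %% n) | m <- iota 0 l]).

Definition bcomb (F : nzRingType) (n : nat) (L : seq (F * (nat * nat * nat * nat))) : lc F :=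
  [seq (x.1, bpath n x.2.1.1.1 x.2.1.1.2 x.2.1.2 x.2.2) | x <- L].

(* Paths of Q from a given vertex are words in u and d, the vertices being
   determined by the start.  Orient each relation as a rewriting rule replacing
   its leading word d k u (k = u or d) by the other terms; reading a word as a
   binary numeral with d = 1, every rule decreases it, so reducing the leftmost
   redex terminates in a normal form: a combination of words avoiding the
   pattern d ? u, i.e. of the words u^k (du)^j d^l.  This gives spanning.  The
   only overlap of two redexes is d d u u and it resolves, so (diamond lemma)
   the normal form may be computed by reducing any redex first; hence the
   coefficients of normal forms are linear functionals killing the ideal and
   reading off the coefficients of reduced words, which gives independence.
   The argument works over any commutative ring. *)

From HB Require Import structures.
From mathcomp Require Import all_boot all_order all_algebra.
From mathcomp Require Import ring zify.
Import Order.TTheory GRing.Theory Num.Theory.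
Set Implicit Arguments. Unset Strict Implicit. Unset Printing Implicit Defensive.

Lemma cat_eq_prefix (T : Type) (A0 A Y Z : seq T) :
  A0 ++ Y = A ++ Z -> (size A0 <= size A)%N -> exists X, A = A0 ++ X /\ Y = X ++ Z.
Proof.
elim: A0 A => [|a A0 IHA] A /=; first by move=> ->; exists A.
case: A => [|b A] //= [-> e_YZ] size_le.
by have [X [-> ->]] := IHA A e_YZ size_le; exists X.
Qed.

(* Words in the arrows: [true] is u and [false] is d.  [lead k] is the leading
   word d k u of a relation (k = u: the first one, k = d: the second one), and
   [word_a k], [word_b k], [word_c k] are the words it is rewritten into. *)
Definition lead (k : bool) := [:: false; k; true].
Definition word_a (k : bool) := if k then [:: true; false; true] else [:: false; true; false].
Definition word_b (k : bool) := if k then [:: true; true; false] else [:: true; false; false].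
Definition word_c (k : bool) := [:: k].

Fixpoint leftmost_redex (w : seq bool) : option (seq bool * bool * seq bool) :=
  match w with
  | false :: k :: true :: w' => Some ([::], k, w')
  | b :: w' => omap (fun r => (b :: r.1.1, r.1.2, r.2)) (leftmost_redex w')
  | [::] => None
  end.

Lemma leftmost_redex_cons b w : leftmost_redex (b :: w) =
  if [&& ~~ b, (1 < size w)%N & nth false w 1] then Some ([::], nth false w 0, drop 2 w)
  else omap (fun r => (b :: r.1.1, r.1.2, r.2)) (leftmost_redex w).
Proof. by case: b; case: w => [|x [|[] w]]; rewrite //= drop0. Qed.

Lemma leftmost_redex_some w A k B :
  leftmost_redex w = Some (A, k, B) -> w = A ++ lead k ++ B.
Proof.
elim: w A k B => [|b w IHw] A k B //; rewrite leftmost_redex_cons.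
case: ifP => [/and3P[/negPf-> w_gt1 w1] [<- <- <-]|_].
  by case: w w_gt1 w1 {IHw} => [|x [|y w]] //= _ ->; rewrite drop0.
by case E: (leftmost_redex w) => [[[A' k'] B']|] //= [<- <- <-]; rewrite (IHw _ _ _ E).
Qed.

Lemma leftmost_redex_min w A k B A' k' B' :
  leftmost_redex w = Some (A, k, B) -> w = A' ++ lead k' ++ B' -> (size A <= size A')%N.
Proof.
elim: w A A' k B => [|b w IHw] A A' k B; first by case: A'.
rewrite leftmost_redex_cons; case: ifP => [_ [<- _ _] //|no_head].
case E: (leftmost_redex w) => [[[A0 k0] B0]|] //= [<- _ _].
case: A' => [|b' A'] /= [e_b e_w]; first by rewrite e_b e_w in no_head.
by rewrite ltnS (IHw _ _ _ _ E e_w).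
Qed.

Lemma leftmost_redex_none w A k B : leftmost_redex w = None -> w <> A ++ lead k ++ B.
Proof.
elim: w A => [|b w IHw] A; first by case: A.
rewrite leftmost_redex_cons; case: ifP => // no_head.
case E: (leftmost_redex w) => //= _.
case: A => [|b' A] /= [e_b e_w]; first by rewrite e_b e_w in no_head.
exact: IHw A E e_w.
Qed.

Definition reduced (w : seq bool) := leftmost_redex w == None.

Definition pbw_word (k j l : nat) :=
  nseq k true ++ flatten (nseq j [:: false; true]) ++ nseq l false.

Lemma reduced_pbw_word k j l : reduced (pbw_word k j l).
Proof.
rewrite /reduced; elim: k => [|k IHk]; last by rewrite /= (eqP IHk).
elim: j => [|j IHj] /=.
  elim: l => [|l IHl] //.
  by rewrite leftmost_redex_cons nth_nseq if_same !andbF (eqP IHl).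
rewrite (eqP IHj).
by case: j {IHj} => [|j] //; case: l.
Qed.

Lemma reducedP w : reduced w -> exists k j l, w = pbw_word k j l.
Proof.
elim: w => [|b w IHw]; first by exists 0%N, 0%N, 0%N.
rewrite /reduced leftmost_redex_cons.
case: ifP => // no_head; case E: (leftmost_redex w) => // _.
have [k [j [l e_w]]] := IHw (introT eqP E).
case: b no_head => no_head; first by exists k.+1, j, l; rewrite e_w.
case: k e_w => [|[|k]] e_w; last by rewrite e_w in no_head.
  case: j e_w => [|j] e_w; last by rewrite e_w in no_head.
  by exists 0%N, 0%N, l.+1; rewrite e_w.
by exists 0%N, j.+1, l; rewrite e_w.
Qed.

(* [weight w] is the binary numeral 1w with u = 0 and d = 1: every reduct of a
   leading word is shorter, or as long and lexicographically smaller. *)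
Definition weight_step (m : nat) (b : bool) := (m.*2 + ~~ b)%N.
Definition weight (w : seq bool) := foldl weight_step 1 w.

Lemma foldl_weight_step_mono m m' w :
  (m < m')%N -> (foldl weight_step m w < foldl weight_step m' w)%N.
Proof.
elim: w m m' => [|b w IHw] m m' lt_m //=; apply: IHw.
by rewrite /weight_step -!muln2; lia.
Qed.

Lemma weight_reducts A k B : let w := weight (A ++ lead k ++ B) in
  [/\ (weight (A ++ word_a k ++ B) < w)%N, (weight (A ++ word_b k ++ B) < w)%N
    & (weight (A ++ word_c k ++ B) < w)%N].
Proof.
by rewrite /weight !foldl_cat; split; apply: foldl_weight_step_mono;
  case: k; rewrite /= /weight_step -!muln2; lia.
Qed.

Section WordPaths.
Variable n : nat.
Hypothesis n_gt0 : (0 < n)%N.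

Lemma vnext_lt v : (vnext n v < n)%N. Proof. exact: ltn_pmod. Qed.
Lemma vprev_lt v : (vprev n v < n)%N. Proof. exact: ltn_pmod. Qed.

Lemma vnext_vprev v : (v < n)%N -> vnext n (vprev n v) = v.
Proof.
move=> v_lt; rewrite /vnext /vprev modnDml.
have -> : (v + n - 1 + 1 = v + n)%N by lia.
by rewrite modnDr modn_small.
Qed.

Lemma vprev_vnext v : (v < n)%N -> vprev n (vnext n v) = v.
Proof.
move=> v_lt; rewrite /vnext /vprev.
have -> : ((v + 1) %% n + n - 1 = (v + 1) %% n + (n - 1))%N by lia.
rewrite modnDml; have -> : (v + 1 + (n - 1) = v + n)%N by lia.
by rewrite modnDr modn_small.
Qed.

Definition vstep (v : nat) (b : bool) := if b then vnext n v else vprev n v.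

Definition walk (s : nat) (w : seq bool) := foldl vstep s w.

Lemma walk_cat s w1 w2 : walk s (w1 ++ w2) = walk (walk s w1) w2.
Proof. exact: foldl_cat. Qed.

Lemma walk_reducts v k : (v < n)%N ->
  [/\ walk v (word_a k) = walk v (lead k), walk v (word_b k) = walk v (lead k)
    & walk v (word_c k) = walk v (lead k)].
Proof.
by move=> v_lt; case: k; rewrite /walk /= /vstep ?vnext_vprev ?vprev_vnext ?vnext_lt ?vprev_lt.
Qed.

Lemma walk_lt s w : (s < n)%N -> (walk s w < n)%N.
Proof.
elim: w s => [|b w IHw] s s_lt //=; apply: IHw.
by case: b; rewrite /vstep ?vnext_lt ?vprev_lt.
Qed.

Fixpoint arrows (v : nat) (w : seq bool) : seq arrow :=
  if w is b :: w' then
    if b then (true, v) :: arrows (vnext n v) w'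
    else (false, vprev n v) :: arrows (vprev n v) w'
  else [::].

Definition word_path (s : nat) (w : seq bool) : qpath := (s, arrows s w).

Lemma arrows_cat v w1 w2 : arrows v (w1 ++ w2) = arrows v w1 ++ arrows (walk v w1) w2.
Proof. by elim: w1 v => [|[] w1 IHw] v //=; rewrite IHw. Qed.

Lemma unzip1_arrows v w : unzip1 (arrows v w) = w.
Proof. by elim: w v => [|[] w IHw] v /=; rewrite ?IHw. Qed.

Lemma word_path_eq s w s' w' :
  (word_path s w == word_path s' w') = (s == s') && (w == w').
Proof.
apply/eqP/andP => [[<- e_arr]|[/eqP<- /eqP<-]] //; split=> //.
by rewrite -(unzip1_arrows s w) e_arr unzip1_arrows.
Qed.

Lemma ptgt_word_path s w : ptgt n (word_path s w) = walk s w.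
Proof. by rewrite /ptgt /=; elim: w s => [|[] w IHw] s //=; rewrite IHw. Qed.

Lemma valid_word_path s w : (s < n)%N -> valid_path n (word_path s w).
Proof.
rewrite /valid_path /= => s_lt; rewrite s_lt /=.
elim: w s s_lt => [|[] w IHw] s s_lt //=.
  by rewrite s_lt eqxx IHw // vnext_lt.
by rewrite vprev_lt /asrc /= -/(vnext n _) vnext_vprev // eqxx IHw // vprev_lt.
Qed.

Lemma word_pathE p : valid_path n p -> p = word_path p.1 (unzip1 p.2).
Proof.
case: p => s l /andP[/= _] chain_l; rewrite /word_path /=; congr (_, _).
move: chain_l; elim: l s => [|[b i] l IHl] s //= /andP[/andP[i_lt /eqP]]; rewrite /asrc /=.
case: b => [<-|s_eq] /IHl /= e_l; first by rewrite -e_l.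
by rewrite -s_eq -/(vnext n i) vprev_vnext // -e_l.
Qed.

Lemma pmul_word_path s w t w' : pmul n (word_path s w) (word_path t w') =
  if walk s w == t then Some (word_path s (w ++ w')) else None.
Proof.
rewrite /pmul ptgt_word_path /=; case: eqP => // <-.
by rewrite /word_path arrows_cat.
Qed.

Lemma arrows_nseq_u x k : arrows (x %% n) (nseq k true) =
  [seq (true, ((x + m) %% n)%N) | m <- iota 0 k].
Proof.
elim: k x => [|k IHk] x //=; rewrite addn0 /vnext modnDml IHk; congr (_ :: _).
rewrite (iotaDl 1 0 k) -map_comp; apply: eq_map => m /=.
by rewrite addnA.
Qed.

Lemma walk_nseq_u x k : walk (x %% n) (nseq k true) = ((x + k) %% n)%N.
Proof.
elim: k x => [|k IHk] x /=; first by rewrite addn0.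
by rewrite /vnext modnDml IHk -addnA add1n.
Qed.

Lemma arrows_du v j : (v < n)%N -> arrows v (flatten (nseq j [:: false; true])) =
  flatten (nseq j [:: (false, vprev n v); (true, vprev n v)]).
Proof. by move=> v_lt; elim: j => [|j IHj] //=; rewrite vnext_vprev // IHj. Qed.

Lemma walk_du v j : (v < n)%N -> walk v (flatten (nseq j [:: false; true])) = v.
Proof. by move=> v_lt; elim: j => [|j IHj] //=; rewrite /vstep vnext_vprev. Qed.

Lemma vprev_mod x : vprev n (x %% n) = ((x + n - 1) %% n)%N.
Proof.
rewrite /vprev; have -> : (x %% n + n - 1 = x %% n + (n - 1))%N by lia.
by rewrite modnDml; have -> : (x + (n - 1) = x + n - 1)%N by lia.
Qed.

Lemma arrows_nseq_d x l : arrows (x %% n) (nseq l false) =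
  [seq (false, ((x + n * m.+1 - m.+1) %% n)%N) | m <- iota 0 l].
Proof.
elim: l x => [|l IHl] x //=; rewrite vprev_mod IHl muln1; congr (_ :: _).
rewrite (iotaDl 1 0 l) -map_comp; apply: eq_map => m /=.
have : (m <= n * m)%N by rewrite leq_pmull.
by rewrite add1n !mulnS => ?; congr (_, _ %% n); lia.
Qed.

Lemma bpath_word_path i j k l : (i < n)%N -> bpath n i j k l = word_path i (pbw_word k j l).
Proof.
move=> i_lt; rewrite /bpath /word_path /pbw_word; congr (_, _).
have i_mod : i = (i %% n)%N by rewrite modn_small.
rewrite !arrows_cat [in RHS]i_mod arrows_nseq_u walk_nseq_u arrows_du ?ltn_pmod //.
by rewrite walk_du ?ltn_pmod // arrows_nseq_d vprev_mod.
Qed.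

End WordPaths.

Local Open Scope ring_scope.

Section FormalSums.
Variables (R : comNzRingType) (T : Type).

Definition lsum (g : T -> R) (l : seq (R * T)) := \sum_(x <- l) x.1 * g x.2.

Definition lscale (c : R) (l : seq (R * T)) := [seq (c * x.1, x.2) | x <- l].

Lemma lsum_cat g l1 l2 : lsum g (l1 ++ l2) = lsum g l1 + lsum g l2.
Proof. exact: big_cat. Qed.

Lemma lsum_scale g c l : lsum g (lscale c l) = c * lsum g l.
Proof. by rewrite /lsum big_map mulr_sumr; apply: eq_bigr => x _; rewrite mulrA. Qed.

End FormalSums.

Lemma lsum_map (R : comNzRingType) (T T' : Type) (g : T' -> R) (f : T -> T') l :
  lsum g [seq (x.1, f x.2) | x <- l] = lsum (g \o f) l.
Proof. exact: big_map. Qed.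

Lemma coef_lsum (F : comNzRingType) (l : lc F) q :
  coef l q = lsum (fun p => (p == q)%:R) l.
Proof.
by rewrite /coef big_mkcond; apply: eq_bigr => x _; case: eqP; rewrite ?mulr1 ?mulr0.
Qed.

Lemma lsum_coefE (F : comNzRingType) (g : qpath -> F) (l : lc F) (S : seq qpath) :
  uniq S -> {subset unzip2 l <= S} -> lsum g l = \sum_(q <- S) coef l q * g q.
Proof.
move=> uS sub; under [RHS]eq_bigr do rewrite /coef big_distrl.
rewrite (exchange_big_dep xpredT) //= /lsum; apply: eq_big_seq => x x_l.
have x2_S : x.2 \in S by apply: sub; apply: map_f.
rewrite (eq_bigl (pred1 x.2)) => [|q]; last by rewrite /= eq_sym.
by rewrite -big_filter filter_pred1_uniq // big_seq1.
Qed.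

Lemma lsum_eq_coef (F : comNzRingType) (g : qpath -> F) (l1 l2 : lc F) :
  coef l1 =1 coef l2 -> lsum g l1 = lsum g l2.
Proof.
move=> e_coef; set S := undup (unzip2 l1 ++ unzip2 l2).
have sub1 : {subset unzip2 l1 <= S} by move=> q q_l; rewrite mem_undup mem_cat q_l.
have sub2 : {subset unzip2 l2 <= S} by move=> q q_l; rewrite mem_undup mem_cat q_l orbT.
rewrite (lsum_coefE _ (undup_uniq _) sub1) (lsum_coefE _ (undup_uniq _) sub2).
by apply: eq_bigr => q _; rewrite e_coef.
Qed.

Section PBWBasis.
Variables (F : comNzRingType) (n : nat) (al be ga : n.-tuple F).
Hypothesis n_gt0 : (0 < n)%N.

(* The relation whose leading word d k u starts at vertex v is the one at
   vertex v (k = u) or at vertex v - 1 (k = d). *)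
Definition rel_index (k : bool) (v : nat) := if k then v else vprev n v.
Definition alpha_at k v := nth 0 al (rel_index k v).
Definition beta_at k v := nth 0 be (rel_index k v).
Definition gamma_at k v := nth 0 ga (rel_index k v).

Definition expand_redex (rec : seq bool -> seq (F * seq bool)) s A k B :=
  let v := walk n s A in
  lscale (alpha_at k v) (rec (A ++ word_a k ++ B))
  ++ lscale (beta_at k v) (rec (A ++ word_b k ++ B))
  ++ lscale (gamma_at k v) (rec (A ++ word_c k ++ B)).

Lemma lsum_expand_redex g rec s A k B : let v := walk n s A in
  lsum g (expand_redex rec s A k B) =
    alpha_at k v * lsum g (rec (A ++ word_a k ++ B))
    + beta_at k v * lsum g (rec (A ++ word_b k ++ B))
    + gamma_at k v * lsum g (rec (A ++ word_c k ++ B)).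
Proof. by rewrite !lsum_cat !lsum_scale addrA. Qed.

Fixpoint nf_fuel (fuel s : nat) (w : seq bool) : seq (F * seq bool) :=
  if fuel is f.+1 then
    if leftmost_redex w is Some (A, k, B) then expand_redex (nf_fuel f s) s A k B
    else [:: (1, w)]
  else [::].

(* Enough fuel, as each reduction decreases the weight. *)
Definition nf (s : nat) (w : seq bool) := nf_fuel (weight w).+1 s w.

Lemma nf_fuel_stable f f' s w :
  (weight w < f)%N -> (f <= f')%N -> nf_fuel f s w = nf_fuel f' s w.
Proof.
elim: f f' w => [|f IHf] [|f'] w //= lt_w le_f.
case E: (leftmost_redex w) => [[[A k] B]|] //.
have [] := weight_reducts A k B; rewrite -(leftmost_redex_some E) => lt_a lt_b lt_c.
by rewrite /expand_redex !(IHf f') //; lia.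
Qed.

Lemma nf_reduced s w : leftmost_redex w = None -> nf s w = [:: (1, w)].
Proof. by rewrite /nf /= => ->. Qed.

Lemma nf_leftmost s w A k B :
  leftmost_redex w = Some (A, k, B) -> nf s w = expand_redex (nf s) s A k B.
Proof.
move=> E; rewrite [LHS]/nf [LHS]/= E.
have [] := weight_reducts A k B; rewrite -(leftmost_redex_some E) => lt_a lt_b lt_c.
by congr (lscale _ _ ++ lscale _ _ ++ lscale _ _); symmetry; apply: nf_fuel_stable.
Qed.

Lemma all_reduced_nf s w : all (reduced \o snd) (nf s w).
Proof.
rewrite /nf; move: (weight w).+1 => f; elim: f w => [|f IHf] w //=.
case E: (leftmost_redex w) => [[[A k] B]|]; last by rewrite /= /reduced E.
by rewrite !all_cat /lscale !all_map !IHf.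
Qed.

Section Confluence.
Variables (s : nat) (g : seq bool -> F).
Hypothesis s_lt : (s < n)%N.

Definition nf_value w := lsum g (nf s w).

Definition reduce_at A k B := let v := walk n s A in
  alpha_at k v * nf_value (A ++ word_a k ++ B) + beta_at k v * nf_value (A ++ word_b k ++ B)
  + gamma_at k v * nf_value (A ++ word_c k ++ B).

Lemma nf_value_reduced w : leftmost_redex w = None -> nf_value w = g w.
Proof. by move=> E; rewrite /nf_value nf_reduced // /lsum big_seq1 mul1r. Qed.

Lemma nf_value_leftmost w A k B :
  leftmost_redex w = Some (A, k, B) -> nf_value w = reduce_at A k B.
Proof. by move=> E; rewrite /nf_value (nf_leftmost _ E) lsum_expand_redex. Qed.

(* The only overlap of two leading words is d d u u = (d d u) u = d (d u u). *)
Lemma reduce_at_overlap A B :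
  (forall A' k' B', (weight (A' ++ lead k' ++ B') < weight (A ++ lead false ++ true :: B))%N ->
     nf_value (A' ++ lead k' ++ B') = reduce_at A' k' B') ->
  reduce_at A false (true :: B) = reduce_at (A ++ [:: false]) true B.
Proof.
move=> IH.
have e_l : A ++ word_b false ++ true :: B = (A ++ [:: true]) ++ lead false ++ B.
  by rewrite -catA.
have e_r : (A ++ [:: false]) ++ word_b true ++ B = A ++ lead true ++ false :: B.
  by rewrite -catA.
have [_ lt_l _] := weight_reducts A false (true :: B).
have [_ lt_r _] := weight_reducts (A ++ [:: false]) true B.
rewrite e_l in lt_l; rewrite e_r -catA in lt_r.
rewrite /reduce_at e_l e_r IH // IH //.
rewrite /reduce_at !walk_cat -!catA /= /alpha_at /beta_at /gamma_at /rel_index /vstep.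
(* both sides are now the same combination of dudu, udud, uudd, ud and du *)
by rewrite vprev_vnext ?walk_lt.
Qed.

Lemma reduce_at_disjoint A k M k' B :
  let W := weight (A ++ lead k ++ M ++ lead k' ++ B) in
  (forall A' k'' B', (weight (A' ++ lead k'' ++ B') < W)%N ->
     nf_value (A' ++ lead k'' ++ B') = reduce_at A' k'' B') ->
  reduce_at A k (M ++ lead k' ++ B) = reduce_at (A ++ lead k ++ M) k' B.
Proof.
move=> W IH.
have IH_l r : (weight (A ++ r ++ M ++ lead k' ++ B) < W)%N ->
    nf_value (A ++ r ++ M ++ lead k' ++ B) = reduce_at (A ++ r ++ M) k' B.
  by have := IH (A ++ r ++ M) k' B; rewrite -!catA.
have [lt_a lt_b lt_c] := weight_reducts A k (M ++ lead k' ++ B).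
have [lt_a' lt_b' lt_c'] := weight_reducts (A ++ lead k ++ M) k' B.
rewrite -!catA in lt_a' lt_b' lt_c'.
rewrite {1}/reduce_at !IH_l // [RHS]/reduce_at -!catA !IH //.
have [e_a e_b e_c] := walk_reducts n_gt0 k (walk_lt n_gt0 A s_lt).
rewrite /reduce_at !walk_cat e_a e_b e_c -!catA.
ring.
Qed.

Lemma nf_value_redex A k B : nf_value (A ++ lead k ++ B) = reduce_at A k B.
Proof.
have [m] := ubnP (weight (A ++ lead k ++ B)); elim: m A k B => // m IHm A k B lt_w.
case E: (leftmost_redex (A ++ lead k ++ B)) => [[[A0 k0] B0]|]; last first.
  by case: (leftmost_redex_none E (erefl _)).
have e_w := leftmost_redex_some E.
have IH A' k' B' : (weight (A' ++ lead k' ++ B') < weight (A0 ++ lead k0 ++ B0))%N ->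
    nf_value (A' ++ lead k' ++ B') = reduce_at A' k' B'.
  by rewrite -e_w => lt_w'; apply: IHm; lia.
have [X [e_A e_X]] := cat_eq_prefix (esym e_w) (leftmost_redex_min E (erefl _)).
rewrite (nf_value_leftmost E) e_A; move: IH; clear E e_w lt_w e_A.
(* the leftmost redex starts size X letters before the given one *)
case: X e_X => [|x1 [|x2 [|x3 M]]] /=.
- by case=> <- <-; rewrite cats0.
- by case=> <- -> <- ->; apply: reduce_at_overlap.
- by case.
- by case=> <- <- <- ->; apply: reduce_at_disjoint.
Qed.

End Confluence.

Lemma in_ideal0 : in_ideal al be ga (fun _ => 0).
Proof. by exists [::]; split => // w; rewrite /coef big_nil. Qed.

Lemma in_ideal_eq f f' : f =1 f' -> in_ideal al be ga f -> in_ideal al be ga f'.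
Proof. by move=> e_f [L [L_ok e_L]]; exists L; split=> // w; rewrite -e_f. Qed.

Lemma in_idealD f f' : in_ideal al be ga f -> in_ideal al be ga f' ->
  in_ideal al be ga (fun w => f w + f' w).
Proof.
move=> [L [L_ok e_L]] [L' [L'_ok e_L']]; exists (L ++ L'); split.
  by move=> x; rewrite mem_cat => /orP[/L_ok|/L'_ok].
by move=> w; rewrite map_cat flatten_cat /coef big_cat -/(coef _ w) -/(coef _ w) e_L e_L'.
Qed.

Lemma in_idealZ c f : in_ideal al be ga f -> in_ideal al be ga (fun w => c * f w).
Proof.
move=> [L [L_ok e_L]]; exists [seq (c * x.1.1.1, x.1.1.2, x.1.2, x.2) | x <- L]; split.
  by move=> _ /mapP[x /L_ok ? ->].
move=> w; rewrite e_L !coef_lsum; elim: L {L_ok e_L} => [|x L IHL] /=.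
  by rewrite /lsum !big_nil mulr0.
rewrite !lsum_cat mulrDr IHL; congr (_ + _).
by rewrite /lsum !big_map mulr_sumr; apply: eq_bigr => y _ /=; rewrite !mulrA.
Qed.

Lemma in_ideal_sandwich p r q : valid_path n p -> valid_path n q -> (r.2 < n)%N ->
  in_ideal al be ga (coef (sandwich n p (relation al be ga r) q)).
Proof.
move=> p_ok q_ok r_lt; exists [:: (1, p, r, q)]; split.
  by move=> x; rewrite mem_seq1 => /eqP->.
move=> w /=; rewrite cats0; congr coef.
by elim: (sandwich _ _ _ _) => //= y S <-; rewrite mul1r -surjective_pairing.
Qed.

Lemma relation_word_path k v : (v < n)%N ->
  relation al be ga (k, rel_index k v) =
  [:: (1, word_path n v (lead k)); (- alpha_at k v, word_path n v (word_a k));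
      (- beta_at k v, word_path n v (word_b k)); (- gamma_at k v, word_path n v (word_c k))].
Proof.
move=> v_lt; case: k; rewrite /relation /word_path /rel_index /= ?vnext_vprev //.
  by rewrite vprev_vnext // vprev_vnext ?vnext_lt.
by rewrite vprev_vnext // vprev_vnext ?vprev_lt.
Qed.

Lemma sandwich_word_path s A k B : (s < n)%N ->
  let v := walk n s A in
  sandwich n (word_path n s A) (relation al be ga (k, rel_index k v))
    (word_path n (walk n s (A ++ lead k)) B) =
  [:: (1, word_path n s (A ++ lead k ++ B));
      (- alpha_at k v, word_path n s (A ++ word_a k ++ B));
      (- beta_at k v, word_path n s (A ++ word_b k ++ B));
      (- gamma_at k v, word_path n s (A ++ word_c k ++ B))].
Proof.
move=> s_lt v; have v_lt : (v < n)%N := walk_lt n_gt0 A s_lt.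
have [e_a e_b e_c] := walk_reducts n_gt0 k v_lt.
rewrite relation_word_path // /sandwich /= !pmul_word_path eqxx /= !pmul_word_path.
by rewrite !walk_cat e_a e_b e_c eqxx /= -!catA.
Qed.

Lemma sandwich_relation_cases p q b i :
  valid_path n p -> valid_path n q -> (i < n)%N ->
  sandwich n p (relation al be ga (b, i)) q = [::] \/
  exists s A B, [/\ (s < n)%N, p = word_path n s A,
    q = word_path n (walk n s (A ++ lead b)) B & i = rel_index b (walk n s A)].
Proof.
move=> p_ok q_ok i_lt; have s_lt : (p.1 < n)%N by case/andP: p_ok.
rewrite (word_pathE n_gt0 p_ok) (word_pathE n_gt0 q_ok).
set s := p.1; set A := unzip1 p.2; set t := q.1; set B := unzip1 q.2.
have [v [v_lt ->]] : exists v, (v < n)%N /\ i = rel_index b v.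
  by case: b; [exists i | exists (vnext n i); rewrite /rel_index vprev_vnext ?vnext_lt].
rewrite relation_word_path // /sandwich /= !pmul_word_path.
have [<-|] := eqVneq (walk n s A) v; last by left.
have [e_a e_b e_c] := walk_reducts n_gt0 b (walk_lt n_gt0 A s_lt).
rewrite /= !pmul_word_path !walk_cat e_a e_b e_c -walk_cat.
have [<-|] := eqVneq (walk n s (A ++ lead b)) t; last by left.
by right; exists s, A, B.
Qed.

Definition to_paths s (l : seq (F * seq bool)) : lc F :=
  [seq (x.1, word_path n s x.2) | x <- l].

Lemma coef_to_paths_nf s w q :
  coef (to_paths s (nf s w)) q = nf_value s (fun u => (word_path n s u == q)%:R) w.
Proof. by rewrite coef_lsum lsum_map. Qed.

Lemma in_ideal_nf s w : (s < n)%N ->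
  in_ideal al be ga (fun q => (q == word_path n s w)%:R - coef (to_paths s (nf s w)) q).
Proof.
move=> s_lt; have [m] := ubnP (weight w); elim: m w => // m IHm w lt_w.
case E: (leftmost_redex w) => [[[A k] B]|]; last first.
  apply: in_ideal_eq in_ideal0 => q.
  by rewrite coef_to_paths_nf nf_value_reduced // eq_sym subrr.
have e_w := leftmost_redex_some E; set v := walk n s A.
have [lt_a lt_b lt_c] := weight_reducts A k B; rewrite -e_w in lt_a lt_b lt_c.
have IH w' : (weight w' < weight w)%N -> in_ideal al be ga
    (fun q => (q == word_path n s w')%:R - coef (to_paths s (nf s w')) q).
  by move=> lt_w'; apply: IHm; lia.
have v_lt : (v < n)%N := walk_lt n_gt0 A s_lt.
have idx_lt : (rel_index k v < n)%N by rewrite /rel_index; case: ifP; rewrite ?vprev_lt.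
have := in_idealD (in_ideal_sandwich (r := (k, rel_index k v)) (valid_word_path n_gt0 A s_lt)
    (valid_word_path n_gt0 B (walk_lt n_gt0 (A ++ lead k) s_lt)) idx_lt)
  (in_idealD (in_idealZ (alpha_at k v) (IH _ lt_a))
    (in_idealD (in_idealZ (beta_at k v) (IH _ lt_b)) (in_idealZ (gamma_at k v) (IH _ lt_c)))).
apply: in_ideal_eq => q /=.
rewrite sandwich_word_path // !coef_to_paths_nf (nf_value_leftmost _ _ E) /reduce_at -/v.
rewrite coef_lsum /lsum !big_cons big_nil -e_w /= !(eq_sym q).
ring.
Qed.

Lemma pbw_decomposition s (l : seq (F * seq bool)) : (s < n)%N -> all (reduced \o snd) l ->
  exists L : seq (F * (nat * nat * nat * nat)),
    (forall x, x \in L -> (x.2.1.1.1 < n)%N) /\ bcomb n L = to_paths s l.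
Proof.
move=> s_lt; elim: l => [|[c u] l IHl] /=; first by exists [::].
case/andP=> /reducedP[k [j [l' ->]]] /IHl[L [L_lt e_L]].
exists ((c, (s, j, k, l')) :: L); split; first by move=> x /predU1P[->|/L_lt].
by rewrite /= e_L bpath_word_path.
Qed.

Lemma bpath_spanning p : valid_path n p ->
  exists L : seq (F * (nat * nat * nat * nat)),
    (forall x, x \in L -> (x.2.1.1.1 < n)%N) /\
    in_ideal al be ga (fun w => (w == p)%:R - coef (bcomb n L) w).
Proof.
move=> p_ok; have s_lt : (p.1 < n)%N by case/andP: p_ok.
have [L [L_lt e_L]] := pbw_decomposition s_lt (all_reduced_nf p.1 (unzip1 p.2)).
exists L; split => //; apply: in_ideal_eq (in_ideal_nf (unzip1 p.2) s_lt) => q.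
by rewrite e_L -(word_pathE n_gt0 p_ok).
Qed.

Definition nf_coord (s0 : nat) (u0 : seq bool) (q : qpath) : F :=
  if valid_path n q && (q.1 == s0) then nf_value s0 (fun u => (u == u0)%:R) (unzip1 q.2)
  else 0.

Lemma nf_coord_word_path s0 u0 s w : (s < n)%N ->
  nf_coord s0 u0 (word_path n s w) =
  if s == s0 then nf_value s0 (fun u => (u == u0)%:R) w else 0.
Proof.
by move=> s_lt; rewrite /nf_coord valid_word_path //= unzip1_arrows; case: eqP => // ->.
Qed.

Lemma nf_coord_pbw s0 u0 s e : (s < n)%N -> reduced e ->
  nf_coord s0 u0 (word_path n s e) = (word_path n s e == word_path n s0 u0)%:R.
Proof.
move=> s_lt /eqP e_red; rewrite nf_coord_word_path // word_path_eq.
by case: eqP => [<-|] //=; rewrite nf_value_reduced.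
Qed.

Lemma lsum_nf_coord_sandwich s0 u0 p r q :
  valid_path n p -> valid_path n q -> (r.2 < n)%N ->
  lsum (nf_coord s0 u0) (sandwich n p (relation al be ga r) q) = 0.
Proof.
case: r => b i p_ok q_ok /= i_lt.
case: (sandwich_relation_cases b p_ok q_ok i_lt) => [->|[s [A [B [s_lt -> -> ->]]]]].
  by rewrite /lsum big_nil.
rewrite sandwich_word_path // /lsum !big_cons big_nil /= !nf_coord_word_path //.
case: eqP => [<-|_]; last by rewrite !mulr0 !addr0.
rewrite nf_value_redex // /reduce_at /=; ring.
Qed.

Lemma bpath_independence L : (forall x, x \in L -> (x.2.1.1.1 < n)%N) ->
  in_ideal al be ga (coef (bcomb n L)) -> forall w, coef (bcomb n L) w = 0.
Proof.
move=> L_lt [M [M_ok e_M]] w0.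
have bcomb_pbw x : x \in bcomb n L ->
    exists s e, [/\ (s < n)%N, reduced e & x.2 = word_path n s e].
  move=> /mapP[[c [[[i j] k] l]] /L_lt /= i_lt ->]; exists i, (pbw_word k j l).
  by rewrite bpath_word_path // reduced_pbw_word.
have [/andP[w0_ok w0_red]|w0_not] := boolP (valid_path n w0 && reduced (unzip1 w0.2)).
  have -> : coef (bcomb n L) w0 = lsum (nf_coord w0.1 (unzip1 w0.2)) (bcomb n L).
    rewrite coef_lsum /lsum !big_seq; apply: eq_bigr => x /bcomb_pbw[s [e [s_lt e_red ->]]].
    by rewrite nf_coord_pbw // -(word_pathE n_gt0 w0_ok).
  rewrite (lsum_eq_coef _ e_M); elim: M M_ok {e_M} => [|x M IHM] M_ok.
    by rewrite /lsum big_nil.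
  have [p_ok q_ok r_lt] := M_ok x (mem_head _ _).
  rewrite /= lsum_cat IHM => [|y y_M]; last by apply: M_ok; rewrite inE y_M orbT.
  by rewrite (lsum_scale _ x.1.1.1) lsum_nf_coord_sandwich // mulr0 addr0.
rewrite /coef big1_seq // => x /andP[/eqP e_x /bcomb_pbw[s [e [s_lt e_red e_x2]]]].
by move: w0_not; rewrite -e_x e_x2 valid_word_path //= unzip1_arrows e_red.
Qed.

End PBWBasis.

Unset Implicit Arguments.

Theorem proposition1p1 (F : closedFieldType) (hchar : [pchar F] =i pred0)
  (n : nat) (hn : (0 < n)%N) (al be ga : n.-tuple F) :
  (* spanning: every path of Q is congruent modulo the ideal of relations to a
     linear combination of the paths bpath i j k l (i < n) *)
  (forall p : qpath, valid_path n p ->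
     exists L : seq (F * (nat * nat * nat * nat)),
       (forall x, x \in L -> (x.2.1.1.1 < n)%N) /\
       in_ideal al be ga (fun w => (w == p)%:R - coef (bcomb n L) w)) /\
  (* linear independence modulo the ideal *)
  (forall L : seq (F * (nat * nat * nat * nat)),
     (forall x, x \in L -> (x.2.1.1.1 < n)%N) ->
     in_ideal al be ga (coef (bcomb n L)) ->
     forall w, coef (bcomb n L) w = 0).
Proof. by split; [exact: bpath_spanning | exact: bpath_independence]. Qed.
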